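(* Let $\lambda$ be an uncountable regular cardinal, $S\subseteq S^\lambda_\omega$ stationary, and $\vec C=\langle C_\delta\mid\delta\in S\rangle$ a club-guessing sequence on $S$. Let $n<\omega$ and let $t:2n\to 2$ be a disjoint type of length $n$. Then there are $\gamma<\delta$, both in $S$, such that $C_\gamma[n]$ and $C_\delta[n]$ are disjoint and $\mathrm{tp}(C_\gamma[n],C_\delta[n])=t$.
   Context: $S^\lambda_\omega=\{\alpha<\lambda\mid\mathrm{cf}(\alpha)=\omega\}$. A club-guessing sequence on $S\subseteq S^\lambda_\omega$ is a sequence $\langle C_\delta\mid\delta\in S\rangle$ such that each $C_\delta$ is a club in $\delta$ of order type $\omega$, and for every club $D\subseteq\lambda$ there are stationarily many $\delta\in S$ with $C_\delta\subseteq D$. For a set of ordinals $A$ and $i<\mathrm{otp}(A)$, $A(i)$ is the unique $\alpha\in A$ with $\mathrm{otp}(A\cap\alpha)=i$, and for $I\subseteq\mathrm{otp}(A)$, $A[I]=\{A(i)\mid i\in I\}$; here $n=\{0,\dots,n-1\}$, so $C_\delta[n]$ is the set of the first $n$ elements of $C_\delta$. A disjoint type of length $n$ is a function $t:2n\to 2$ taking the value $0$ exactly $n$ times and the value $1$ exactly $n$ times. For disjoint $n$-element sets of ordinals $a,b$, $\mathrm{tp}(a,b)$ is the unique disjoint type $t$ of length $n$ such that, enumerating $a\cup b$ increasingly as $\alpha_0<\dots<\alpha_{2n-1}$, we have $a=\{\alpha_i\mid t(i)=0\}$ and $b=\{\alpha_i\mid t(i)=1\}$. *)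

(* The cardinal lambda is modelled as a type T carrying a
   strict well-order [lt]; elements of T are the ordinals < lambda. *)
From Stdlib Require Import Arith List Classical.
Import ListNotations.

Section Defs.
Context {T : Type} (lt : T -> T -> Prop).

Definition le (x y : T) : Prop := lt x y \/ x = y.

Definition well_order : Prop :=
  well_founded lt /\
  (forall x y z, lt x y -> lt y z -> lt x z) /\
  (forall x y, lt x y \/ x = y \/ lt y x).

Definition injective {A B : Type} (f : A -> B) : Prop :=
  forall a b, f a = f b -> a = b.

Definition is_cardinal : Prop :=
  forall x : T, ~ exists f : T -> {y : T | lt y x}, injective f.

Definition uncountable : Prop := ~ exists f : T -> nat, injective f.

Definition regular : Prop :=
  forall A : T -> Prop, (forall x, exists a, A a /\ le x a) ->
    exists f : T -> {a : T | A a}, injective f.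

Definition uncountable_regular_cardinal : Prop :=
  well_order /\ is_cardinal /\ uncountable /\ regular.

Definition cof_omega (alpha : T) : Prop :=
  exists f : nat -> T,
    (forall m k, m < k -> lt (f m) (f k)) /\
    (forall k, lt (f k) alpha) /\
    (forall b, lt b alpha -> exists k, lt b (f k)).

Definition club (D : T -> Prop) : Prop :=
  (forall x, exists d, D d /\ lt x d) /\
  (forall a, (exists b, lt b a) ->
     (forall b, lt b a -> exists d, D d /\ lt b d /\ lt d a) -> D a).

Definition stationary (S : T -> Prop) : Prop :=
  forall D, club D -> exists d, S d /\ D d.

Definition club_in (delta : T) (C : T -> Prop) : Prop :=
  (forall x, C x -> lt x delta) /\
  (forall x, lt x delta -> exists c, C c /\ lt x c) /\
  (forall a, lt a delta -> (exists b, lt b a) ->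
     (forall b, lt b a -> exists d, C d /\ lt b d /\ lt d a) -> C a).

Definition otp_omega (C : T -> Prop) : Prop :=
  exists e : nat -> T,
    (forall m k, m < k -> lt (e m) (e k)) /\
    (forall x, C x <-> exists k, e k = x).

Definition club_guessing (S : T -> Prop) (C : T -> T -> Prop) : Prop :=
  (forall d, S d -> club_in d (C d) /\ otp_omega (C d)) /\
  (forall D, club D -> stationary (fun d => S d /\ forall x, C d x -> D x)).

(* A(i) = alpha  iff  alpha in A and otp(A cap alpha) = i (i finite) *)
Definition nth_elem (A : T -> Prop) (i : nat) (alpha : T) : Prop :=
  A alpha /\
  exists l : list T, NoDup l /\ length l = i /\
    forall b, In b l <-> (A b /\ lt b alpha).

Definition first_n (A : T -> Prop) (n : nat) (x : T) : Prop :=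
  exists i, i < n /\ nth_elem A i x.

Definition disjoint (a b : T -> Prop) : Prop := forall x, a x -> b x -> False.

End Defs.

(* disjoint type of length n: t : 2n -> 2 (false = 0, true = 1), only the
   values on i < 2n matter *)
Definition disjoint_type (n : nat) (t : nat -> bool) : Prop :=
  length (filter (fun i => negb (t i)) (seq 0 (2 * n))) = n /\
  length (filter (fun i => t i) (seq 0 (2 * n))) = n.

Definition has_tp {T : Type} (lt : T -> T -> Prop) (n : nat) (t : nat -> bool)
    (a b : T -> Prop) : Prop :=
  exists f : nat -> T,
    (forall i j, i < j < 2 * n -> lt (f i) (f j)) /\
    (forall x, a x <-> exists i, i < 2 * n /\ t i = false /\ f i = x) /\
    (forall x, b x <-> exists i, i < 2 * n /\ t i = true /\ f i = x).

From Stdlib Require Import Arith List Lia.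
From Stdlib Require Import Classical ClassicalEpsilon ProofIrrelevance FinFun.
Import ListNotations.

(* Call a finite increasing sequence s of ordinals "rich" if for
   every club E some ladder C_d (d in S) starts with s and has all its later
   points in E.  The empty sequence is rich by club guessing, and a rich s
   can be prolonged by arbitrarily large points: otherwise, choosing for each
   x a club E_x refuting the richness of s ++ [x], the diagonal intersection
   of the E_x (a club, by regularity of lambda) refutes the richness of s.
   Reading the type t from left to right, we grow two rich sequences at once,
   putting each new point (above all previous ones) into the first sequence
   when t i = 0 and into the second when t i = 1.  Finally the first sequence
   is the beginning C_g[n] of some ladder, and the second is C_d[n] for some
   ladder all of whose later points lie above g, whence g < d. *)

Section Selection.
Context {A : Type}.

Definition selected (f : nat -> A) (p : nat -> bool) (j : nat) : list A :=
  map f (filter p (seq 0 j)).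

Definition update (f : nat -> A) (j : nat) (x : A) : nat -> A :=
  fun i => if Nat.eqb i j then x else f i.

Lemma in_selected (f : nat -> A) (p : nat -> bool) (j : nat) (x : A) :
  In x (selected f p j) <-> exists i, i < j /\ p i = true /\ f i = x.
Proof.
  unfold selected. rewrite in_map_iff. split.
  - intros [i [<- Hi]]. apply filter_In in Hi as [Hi Hp]. apply in_seq in Hi.
    exists i. repeat split; [lia | exact Hp].
  - intros [i [Hi [Hp <-]]]. exists i. split; [reflexivity |].
    apply filter_In. split; [apply in_seq; lia | exact Hp].
Qed.

Lemma selected_update (f : nat -> A) (p : nat -> bool) (j : nat) (x : A) :
  selected (update f j x) p (S j) = selected f p j ++ (if p j then [x] else []).
Proof.
  unfold selected. rewrite seq_S, filter_app, map_app. f_equal.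
  - apply map_ext_in. intros i Hi. apply filter_In in Hi as [Hi _]. apply in_seq in Hi.
    unfold update. destruct (Nat.eqb_spec i j); [lia | reflexivity].
  - simpl. destruct (p j); simpl; [unfold update; rewrite Nat.eqb_refl |]; reflexivity.
Qed.

End Selection.

Section Ordinals.
Variable T : Type.
Variable lt : T -> T -> Prop.
Hypothesis lt_wf : well_founded lt.
Hypothesis lt_trans : forall x y z, lt x y -> lt y z -> lt x z.
Hypothesis lt_trichotomy : forall x y, lt x y \/ x = y \/ lt y x.
Hypothesis lam_cardinal : is_cardinal lt.
Hypothesis lam_uncountable : @uncountable T.
Hypothesis lam_regular : regular lt.

Lemma lt_irrefl (x : T) : ~ lt x x.
Proof.
  induction (lt_wf x) as [x _ IH]. intros Hxx. exact (IH x Hxx Hxx).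
Qed.

Lemma le_lt_trans (x y z : T) : le lt x y -> lt y z -> lt x z.
Proof. intros [Hxy | <-] Hyz; [exact (lt_trans _ _ _ Hxy Hyz) | exact Hyz]. Qed.

(* Otherwise its image is
   cofinal, regularity injects lambda into the image, and picking a preimage
   of each point injects lambda into the index set. *)
Lemma bounded_family (I : Type) : (~ exists f : T -> I, injective f) ->
  forall h : I -> T, exists z, forall i, lt (h i) z.
Proof.
  intros Hsmall h. apply NNPP. intros Hunb. apply Hsmall.
  destruct (lam_regular (fun a => exists i, h i = a)) as [F HF].
  { intros z. apply NNPP. intros Hz. apply Hunb. exists z. intros i.
    destruct (lt_trichotomy (h i) z) as [Hlt | [Heq | Hgt]]; [exact Hlt | |];
      exfalso; apply Hz; exists (h i); (split; [exists i; reflexivity |]).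
    - right. symmetry. exact Heq.
    - left. exact Hgt. }
  set (index := fun z => proj1_sig (constructive_indefinite_description _ (proj2_sig (F z)))).
  assert (Hindex : forall z, h (index z) = proj1_sig (F z)).
  { intros z. exact (proj2_sig (constructive_indefinite_description _ (proj2_sig (F z)))). }
  exists index. intros z1 z2 Heq. apply HF.
  assert (Hval : proj1_sig (F z1) = proj1_sig (F z2)) by (rewrite <- !Hindex, Heq; reflexivity).
  destruct (F z1), (F z2). apply subset_eq_compat. exact Hval.
Qed.

Lemma bounded_on_segment (b : T) (h : T -> T) :
  exists z, forall x, lt x b -> lt (h x) z.
Proof.
  destruct (bounded_family _ (lam_cardinal b) (fun y => h (proj1_sig y))) as [z Hz].
  exists z. intros x Hx. exact (Hz (exist _ x Hx)).
Qed.

Lemma bounded_sequence (a : nat -> T) : exists z, forall m, lt (a m) z.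
Proof. exact (bounded_family nat lam_uncountable a). Qed.

Lemma upper_bound2 (x y : T) : exists z, lt x z /\ lt y z.
Proof.
  destruct (bounded_sequence (fun m => match m with 0 => x | _ => y end)) as [z Hz].
  exists z. exact (conj (Hz 0) (Hz 1)).
Qed.

Lemma inhabited_lambda : exists x : T, True.
Proof.
  apply NNPP. intros Hempty. apply lam_uncountable. exists (fun _ => 0).
  intros a b _. exfalso. apply Hempty. exists a. exact I.
Qed.

Lemma least_element (P : T -> Prop) :
  (exists x, P x) -> exists x, P x /\ forall y, P y -> ~ lt y x.
Proof.
  intros [x Hx]. apply NNPP. intros Hnone. revert Hx.
  induction (lt_wf x) as [x _ IH]. intros Hx.
  apply Hnone. exists x. split; [exact Hx |]. intros y Hy Hyx. exact (IH y Hyx Hy).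
Qed.

Lemma omega_supremum (a : nat -> T) : (forall m, lt (a m) (a (S m))) ->
  exists s, (forall m, lt (a m) s) /\ (forall c, lt c s -> exists m, lt c (a m)).
Proof.
  intros Hinc. destruct (bounded_sequence a) as [z Hz].
  destruct (least_element (fun s => forall m, lt (a m) s)) as [s [Hs Hleast]];
    [exists z; exact Hz |].
  exists s. split; [exact Hs |]. intros c Hcs.
  apply NNPP. intros Hc. apply (Hleast c); [| exact Hcs]. intros m.
  destruct (lt_trichotomy (a m) c) as [H | [H | H]]; [exact H | |];
    exfalso; apply Hc; [exists (S m); rewrite <- H | exists m]; auto.
Qed.

Lemma club_full : club lt (fun _ => True).
Proof.
  split; [| auto]. intros x. destruct (upper_bound2 x x) as [y [Hy _]]. exists y. auto.
Qed.

Lemma club_above (g : T) : club lt (fun z => lt g z).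
Proof.
  split.
  - intros x. destruct (upper_bound2 g x) as [z Hz]. exists z. exact Hz.
  - intros a [b Hb] Hcof. destruct (Hcof b Hb) as [d [Hgd [_ Hda]]].
    exact (lt_trans _ _ _ Hgd Hda).
Qed.

Definition diagonal (E : T -> T -> Prop) (b0 : T) (a : T) : Prop :=
  lt b0 a /\ forall x, lt x a -> E x a.

Section Diagonal.
Variable E : T -> T -> Prop.
Hypothesis E_club : forall x, club lt (E x).

(* Above any [b] there is [b'] such that each [E x] with [x < b] meets the
   interval (b, b'); this needs the clubs [E x], x < b, to be fewer than
   [lambda]. *)
Lemma catch_up (b : T) : exists b', lt b b' /\
  forall x, lt x b -> exists d, E x d /\ lt b d /\ lt d b'.
Proof.
  destruct (choice (fun x d => E x d /\ lt b d)) as [h Hh].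
  { intros x. destruct (proj1 (E_club x) b) as [d Hd]. exists d. exact Hd. }
  destruct (bounded_on_segment b h) as [z Hz].
  destruct (upper_bound2 b z) as [b' [Hbb' Hzb']].
  exists b'. split; [exact Hbb' |]. intros x Hx. exists (h x).
  destruct (Hh x) as [HE Hb]. repeat split; [exact HE | exact Hb |].
  exact (lt_trans _ _ _ (Hz x Hx) Hzb').
Qed.

(* Closedness: at a limit [a] of diagonal points, each [E x] with [x < a]
   contains the diagonal points above [x], so is unbounded in [a]. *)
Lemma diagonal_closed (b0 : T) (a : T) : (exists b, lt b a) ->
  (forall b, lt b a -> exists d, diagonal E b0 d /\ lt b d /\ lt d a) ->
  diagonal E b0 a.
Proof.
  intros [b Hba] Hcof. destruct (Hcof b Hba) as [d [[Hb0d _] [_ Hda]]].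
  split; [exact (lt_trans _ _ _ Hb0d Hda) |].
  intros x Hxa. apply (proj2 (E_club x)); [exists x; exact Hxa |].
  intros c Hca.
  assert (Hm : exists m, lt m a /\ le lt c m /\ le lt x m).
  { destruct (lt_trichotomy c x) as [H | [<- | H]];
      [exists x | exists c | exists c]; unfold le; auto. }
  destruct Hm as [m [Hma [Hcm Hxm]]].
  destruct (Hcof m Hma) as [e [[_ He] [Hme Hea]]].
  exists e. repeat split; [| exact (le_lt_trans _ _ _ Hcm Hme) | exact Hea].
  apply He. exact (le_lt_trans _ _ _ Hxm Hme).
Qed.

(* Iterating [catch_up] omega times from above [y] and [b0], the supremum
   lies in the diagonal intersection. *)
Lemma diagonal_unbounded (b0 y : T) : exists a, diagonal E b0 a /\ lt y a.
Proof.
  destruct (choice _ catch_up) as [next Hnext].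
  destruct (upper_bound2 y b0) as [w [Hyw Hb0w]].
  set (a := fun m => Nat.iter m next (next w)).
  assert (Hinc : forall m, lt (a m) (a (S m))) by (intros m; apply (Hnext (a m))).
  destruct (omega_supremum a Hinc) as [s [Habove Hcof]].
  assert (Hws : lt w s) by exact (lt_trans _ _ _ (proj1 (Hnext w)) (Habove 0)).
  exists s. repeat split; [exact (lt_trans _ _ _ Hb0w Hws) | | exact (lt_trans _ _ _ Hyw Hws)].
  intros x Hxs. apply (proj2 (E_club x)); [exists x; exact Hxs |].
  intros c Hcs. destruct (Hcof c Hcs) as [m1 Hc], (Hcof x Hxs) as [m2 Hx].
  assert (Hk : exists k, lt c (a k) /\ lt x (a k)).
  { destruct (lt_trichotomy (a m1) (a m2)) as [H | [H | H]].
    - exists m2. split; [exact (lt_trans _ _ _ Hc H) | exact Hx].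
    - exists m2. split; [rewrite <- H; exact Hc | exact Hx].
    - exists m1. split; [exact Hc | exact (lt_trans _ _ _ Hx H)]. }
  destruct Hk as [k [Hck Hxk]].
  destruct (proj2 (Hnext (a k)) x Hxk) as [d [Hd [Hkd Hdk]]].
  exists d. repeat split; [exact Hd | exact (lt_trans _ _ _ Hck Hkd) |].
  exact (lt_trans _ _ _ Hdk (Habove (S k))).
Qed.

Lemma diagonal_club (b0 : T) : club lt (diagonal E b0).
Proof.
  split.
  - intros y. destruct (diagonal_unbounded b0 y) as [a Ha]. exists a. exact Ha.
  - apply diagonal_closed.
Qed.

End Diagonal.

Lemma increasing_injective (f : nat -> T) (j : nat) :
  (forall i k, i < k < j -> lt (f i) (f k)) ->
  forall i k, i < j -> k < j -> f i = f k -> i = k.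
Proof.
  intros Hinc i k Hi Hk Heq.
  destruct (Nat.lt_total i k) as [H | [H | H]]; [| exact H |]; exfalso.
  - assert (Hlt : lt (f i) (f k)) by (apply Hinc; lia). rewrite Heq in Hlt. exact (lt_irrefl _ Hlt).
  - assert (Hlt : lt (f k) (f i)) by (apply Hinc; lia). rewrite Heq in Hlt. exact (lt_irrefl _ Hlt).
Qed.

Definition enumerates (e : nat -> T) (A : T -> Prop) : Prop :=
  (forall m k, m < k -> lt (e m) (e k)) /\ (forall x, A x <-> exists k, e k = x).

Lemma enumerates_lt_iff (e : nat -> T) (A : T -> Prop) : enumerates e A ->
  forall m k, lt (e m) (e k) <-> m < k.
Proof.
  intros [Hinc _] m k. split; [| apply Hinc]. intros Hmk.
  destruct (Nat.lt_total m k) as [H | [<- | H]]; [exact H | |];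
    exfalso; [exact (lt_irrefl _ Hmk) | exact (lt_irrefl _ (lt_trans _ _ _ Hmk (Hinc _ _ H)))].
Qed.

Lemma enumerates_injective (e : nat -> T) (A : T -> Prop) : enumerates e A -> Injective e.
Proof.
  intros He m k Heq. apply Nat.le_antisymm; apply Nat.nlt_ge; intros H;
    apply (enumerates_lt_iff e A He) in H; rewrite Heq in H; exact (lt_irrefl _ H).
Qed.

(* The i-th element of [A] is [e i]: the elements of [A] below [e k] are
   exactly [e 0], ..., [e (k-1)], a duplicate-free list of length [k]. *)
Lemma nth_elem_enumerates (e : nat -> T) (A : T -> Prop) : enumerates e A ->
  forall i x, nth_elem lt A i x <-> e i = x.
Proof.
  intros He i x.
  assert (Hbelow : forall k b, In b (map e (seq 0 k)) <-> A b /\ lt b (e k)).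
  { intros k b. rewrite in_map_iff. split.
    - intros [m [<- Hm]]. apply in_seq in Hm. split.
      + apply (proj2 He). exists m. reflexivity.
      + apply (enumerates_lt_iff e A He). lia.
    - intros [Hb Hbk]. destruct (proj1 (proj2 He b) Hb) as [m <-].
      exists m. split; [reflexivity |]. apply in_seq.
      apply (enumerates_lt_iff e A He) in Hbk. lia. }
  assert (Hnodup : forall k, NoDup (map e (seq 0 k))).
  { intros k. apply Injective_map_NoDup; [exact (enumerates_injective e A He) | apply seq_NoDup]. }
  split.
  - intros [Hx [l [Hl [Hlen Hin]]]]. destruct (proj1 (proj2 He x) Hx) as [k <-].
    assert (Hsame : forall b, In b l <-> In b (map e (seq 0 k))).
    { intros b. rewrite Hin, Hbelow. reflexivity. }
    assert (L1 := NoDup_incl_length Hl (fun b => proj1 (Hsame b))).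
    assert (L2 := NoDup_incl_length (Hnodup k) (fun b => proj2 (Hsame b))).
    rewrite length_map, length_seq in L1, L2.
    replace i with k by lia. reflexivity.
  - intros <-. split; [apply (proj2 He); exists i; reflexivity |].
    exists (map e (seq 0 i)). split; [apply Hnodup |].
    split; [rewrite length_map, length_seq; reflexivity | apply Hbelow].
Qed.

Lemma first_n_enumerates (e : nat -> T) (A : T -> Prop) (n : nat) : enumerates e A ->
  forall x, first_n lt A n x <-> In x (map e (seq 0 n)).
Proof.
  intros He x. unfold first_n. rewrite in_map_iff. split.
  - intros [i [Hi Hx]]. exists i. split; [apply (nth_elem_enumerates e A He); exact Hx |].
    apply in_seq. lia.
  - intros [i [Hx Hi]]. apply in_seq in Hi. exists i.
    split; [lia | apply (nth_elem_enumerates e A He); exact Hx].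
Qed.

Section Guessing.
Variable Dom : T -> Prop.
Variable C : T -> T -> Prop.
Hypothesis ladders : forall d, Dom d -> club_in lt d (C d) /\ otp_omega lt (C d).
Hypothesis guessing : forall D, club lt D -> stationary lt (fun d => Dom d /\ forall x, C d x -> D x).

Definition ladder_extends (s : list T) (E : T -> Prop) (d : T) : Prop :=
  Dom d /\ exists e, enumerates e (C d) /\ map e (seq 0 (length s)) = s /\
    forall i, length s <= i -> E (e i).

Definition rich (s : list T) : Prop :=
  forall E, club lt E -> exists d, ladder_extends s E d.

Lemma rich_nil : rich [].
Proof.
  intros E HE. destruct (guessing E HE E HE) as [d [[Hd HCd] _]].
  destruct (proj2 (ladders d Hd)) as [e He].
  exists d. split; [exact Hd |]. exists e. split; [exact He |]. split; [reflexivity |].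
  intros i _. apply HCd. apply (proj2 He). exists i. reflexivity.
Qed.

(* A rich sequence has rich one-point extensions by arbitrarily large points:
   the diagonal intersection of clubs refuting all such extensions would
   refute the richness of [s] itself. *)
Lemma rich_extend (s : list T) : rich s -> forall b, exists x, lt b x /\ rich (s ++ [x]).
Proof.
  intros Hs b. apply NNPP. intros Hnone.
  assert (Hrefute : forall x, exists E, club lt E /\
            (lt b x -> forall d, ~ ladder_extends (s ++ [x]) E d)).
  { intros x. destruct (classic (lt b x)) as [Hbx | Hbx].
    - assert (Hpoor : ~ rich (s ++ [x])) by (intros Hr; apply Hnone; exists x; auto).
      apply not_all_ex_not in Hpoor as [E HE]. apply imply_to_and in HE as [HE Hno].
      exists E. split; [exact HE |]. intros _ d Hd. apply Hno. exists d. exact Hd.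
    - exists (fun _ => True). split; [exact club_full | contradiction]. }
  destruct (choice _ Hrefute) as [E HE].
  destruct (Hs _ (diagonal_club E (fun x => proj1 (HE x)) b)) as [d [Hd [e [He [Hpre Hrest]]]]].
  destruct (Hrest (length s) (le_n _)) as [Hbx Hdiag].
  apply (proj2 (HE (e (length s))) Hbx d). split; [exact Hd |].
  exists e. split; [exact He |]. rewrite length_app, Nat.add_1_r. split.
  - rewrite seq_S, map_app, Hpre. reflexivity.
  - intros i Hi. apply (proj2 (Hrest i ltac:(lia))).
    apply (enumerates_lt_iff e _ He). lia.
Qed.

Lemma rich_realized (s : list T) : rich s -> forall E, club lt E ->
  exists d, Dom d /\ (forall x, first_n lt (C d) (length s) x <-> In x s) /\
    exists c, C d c /\ E c.
Proof.
  intros Hs E HE. destruct (Hs E HE) as [d [Hd [e [He [Hpre Hrest]]]]].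
  exists d. split; [exact Hd |]. split.
  - intros x. rewrite (first_n_enumerates e _ _ He), Hpre. reflexivity.
  - exists (e (length s)). split; [apply (proj2 He); exists (length s); reflexivity |].
    apply Hrest. reflexivity.
Qed.

(* Following a colouring [t] of the indices, build an increasing sequence
   whose two colour classes are both rich: each new point is a rich
   extension, above all previous points, of the class of its colour. *)
Lemma interleaved_rich (t : nat -> bool) (j : nat) :
  exists f : nat -> T, (forall i k, i < k < j -> lt (f i) (f k)) /\
    rich (selected f (fun i => negb (t i)) j) /\ rich (selected f t j).
Proof.
  destruct inhabited_lambda as [x0 _].
  induction j as [| j [f [Hinc [Hrich0 Hrich1]]]].
  { exists (fun _ => x0). split; [intros; lia | split; apply rich_nil]. }
  assert (Hbound : exists b, forall i, i < j -> le lt (f i) b).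
  { destruct j as [| j]; [exists x0; intros; lia |]. exists (f j). intros i Hi.
    destruct (Nat.eq_dec i j) as [-> | Hne]; [right; reflexivity | left; apply Hinc; lia]. }
  destruct Hbound as [b Hb].
  assert (Hinc' : forall x, lt b x ->
            forall i k, i < k < S j -> lt (update f j x i) (update f j x k)).
  { intros x Hbx i k Hik. unfold update.
    destruct (Nat.eqb_spec k j), (Nat.eqb_spec i j); try lia.
    - exact (le_lt_trans _ _ _ (Hb i ltac:(lia)) Hbx).
    - apply Hinc. lia. }
  destruct (t j) eqn:Htj.
  - destruct (rich_extend _ Hrich1 b) as [x [Hbx Hx]]. exists (update f j x).
    rewrite !selected_update, Htj, app_nil_r. auto.
  - destruct (rich_extend _ Hrich0 b) as [x [Hbx Hx]]. exists (update f j x).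
    rewrite !selected_update, Htj, app_nil_r. auto.
Qed.

(* The main argument: the two colour classes of [interleaved_rich] for the
   type [t] are [C g [n]] and [C d [n]], where [d] is chosen with a ladder
   point above [g]. *)
Lemma realize_disjoint_type (n : nat) (t : nat -> bool) : disjoint_type n t ->
  exists g d, Dom g /\ Dom d /\ lt g d /\
    disjoint (first_n lt (C g) n) (first_n lt (C d) n) /\
    has_tp lt n t (first_n lt (C g) n) (first_n lt (C d) n).
Proof.
  intros [Hlen0 Hlen1].
  destruct (interleaved_rich t (2 * n)) as [f [Hinc [Hrich0 Hrich1]]].
  destruct (rich_realized _ Hrich0 _ club_full) as [g [Hg [HCg _]]].
  destruct (rich_realized _ Hrich1 _ (club_above g)) as [d [Hd [HCd [c [Hc Hgc]]]]].
  assert (Hsize0 : length (selected f (fun i => negb (t i)) (2 * n)) = n)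
    by (unfold selected; rewrite length_map; exact Hlen0).
  assert (Hsize1 : length (selected f t (2 * n)) = n)
    by (unfold selected; rewrite length_map; exact Hlen1).
  rewrite Hsize0 in HCg. rewrite Hsize1 in HCd.
  assert (Hgd : lt g d) by exact (lt_trans _ _ _ Hgc (proj1 (proj1 (ladders d Hd)) c Hc)).
  assert (HCg' : forall x, first_n lt (C g) n x <->
                   exists i, i < 2 * n /\ t i = false /\ f i = x).
  { intros x. rewrite HCg, in_selected. setoid_rewrite Bool.negb_true_iff. reflexivity. }
  assert (HCd' : forall x, first_n lt (C d) n x <->
                   exists i, i < 2 * n /\ t i = true /\ f i = x).
  { intros x. rewrite HCd, in_selected. reflexivity. }
  exists g, d. repeat split; [exact Hg | exact Hd | exact Hgd | |].
  - intros x Hx Hy. apply HCg' in Hx as [i [Hi [Hti <-]]]. apply HCd' in Hy as [k [Hk [Htk Hfk]]].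
    assert (i = k) as -> by exact (increasing_injective f _ Hinc i k Hi Hk (eq_sym Hfk)).
    congruence.
  - exists f. split; [intros i k Hik; apply Hinc; lia | split; [exact HCg' | exact HCd']].
Qed.

End Guessing.

End Ordinals.

Theorem lemma3p4 (T : Type) (lt : T -> T -> Prop)
  (Hlam : uncountable_regular_cardinal lt)
  (S : T -> Prop) (HSw : forall d, S d -> cof_omega lt d)
  (HS : stationary lt S)
  (C : T -> T -> Prop) (HC : club_guessing lt S C)
  (n : nat) (t : nat -> bool) (Ht : disjoint_type n t) :
  exists g d, S g /\ S d /\ lt g d /\
    disjoint (first_n lt (C g) n) (first_n lt (C d) n) /\
    has_tp lt n t (first_n lt (C g) n) (first_n lt (C d) n).
Proof.
  destruct Hlam as [[Hwf [Htrans Htri]] [Hcard [Hunc Hreg]]].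
  destruct HC as [Hladders Hguessing].
  exact (realize_disjoint_type T lt Hwf Htrans Htri Hcard Hunc Hreg
           S C Hladders Hguessing n t Ht).
Qed.
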